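(* Let $e\ge2$ and let $p^r$, $q^s$ be prime powers with $p^r\equiv 1\pmod e$ and $q^s\equiv1\pmod e$ (the cases $p\ne q$ and $p=q$ are both allowed). Let $\eta_r:\mathbb{Z}/e\mathbb{Z}\to\mathbb{C}$ be the Gaussian periods of degree $e$ for $\mathbb{F}_{p^r}$ (with respect to a fixed generator of $\mathbb{F}_{p^r}^\times$) and $\eta'_s$ those for $\mathbb{F}_{q^s}$ (with respect to a fixed generator of $\mathbb{F}_{q^s}^\times$), and let $C$, $C'$ be the corresponding multiplication matrices. Then for every $d\in(\mathbb{Z}/e\mathbb{Z})\setminus\{0\}$ and all $i,j\in\mathbb{Z}/e\mathbb{Z}$, \[ (\eta_r\overset{d}{\ast}\eta'_s)(i)\,(\eta_r\overset{d}{\ast}\eta'_s)(j)=\sum_{k=0}^{e-1}(C\overset{d}{\ast}C')[j-i,k-i]\,(\eta_r\overset{d}{\ast}\eta'_s)(k). \]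
   Context: For a prime power $Q=\ell^m$ ($\ell$ prime) with $Q\equiv1\pmod e$, write $Q=ef+1$, let $\zeta_\ell=e^{2\pi i/\ell}$, $\mathrm{Tr}:\mathbb{F}_Q\to\mathbb{F}_\ell$ the trace, $\beta$ a generator of $\mathbb{F}_Q^\times$. Gaussian periods: $\eta(i)=\sum_{j=0}^{f-1}\zeta_\ell^{\mathrm{Tr}(\beta^{ej+i})}$. Cyclotomic numbers: $\mathrm{Cyc}(i,j)=\#\{(v_1,v_2):0\le v_1,v_2\le f-1,\ 1+\beta^{ev_1+i}=\beta^{ev_2+j}\}$. Let $D_i=1$ if $-1\in\beta^i(\mathbb{F}_Q^\times)^e$ and $0$ otherwise. The multiplication matrix is $[\mathrm{Cyc}(i,j)-D_if]_{0\le i,j\le e-1}$, with indices modulo $e$ and $M[i,j]$ denoting the $(i,j)$ entry. For functions $f,g$ on $\mathbb{Z}/e\mathbb{Z}$, $(f\overset{d}{\ast}g)(i)=\sum_{s=0}^{e-1}f(s)g(ds+i)$; for matrices, $A\overset{d}{\ast}B=\big[\sum_{s,t=0}^{e-1}a_{s,t}b_{ds+i,dt+j}\big]_{0\le i,j\le e-1}$. *)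

From mathcomp Require Import all_boot all_order all_algebra all_field.
Set Implicit Arguments. Unset Strict Implicit. Unset Printing Implicit Defensive.
Import GRing.Theory Num.Theory.
Local Open Scope ring_scope.

(* zeta_l = e^{2 pi i / l}: the l-th root of -1 with minimal non-negative
   argument is e^{i pi / l}; its square is e^{2 pi i / l}. *)
Definition zeta (l : nat) : algC := (l.-root (-1)) ^+ 2.

Section Gauss.
Variables (F : finFieldType) (l m : nat).

Definition trF (x : F) : F := \sum_(k < m) x ^+ (l ^ k).

(* the trace read as an element of {0,..,l-1} = F_l *)
Definition trnat (x : F) : nat :=
  odflt 0%N (omap (@nat_of_ord l) [pick k : 'I_l | (k%:R : F) == trF x]).

Variables (e : nat) (beta : F).

Definition ff : nat := ((#|F| - 1) %/ e)%N.

Definition eta (i : nat) : algC :=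
  \sum_(j < ff) zeta l ^+ trnat (beta ^+ (e * j + i %% e)%N).

Definition Cyc (i j : nat) : nat :=
  #|[set v : 'I_ff * 'I_ff |
      1 + beta ^+ (e * v.1 + i %% e)%N == beta ^+ (e * v.2 + j %% e)%N]|.

Definition Dsgn (i : nat) : nat :=
  [exists v : 'I_ff, - 1 == beta ^+ (e * v + i %% e)%N].

Definition multmx (i j : nat) : algC := (Cyc i j)%:R - (Dsgn i * ff)%:R.

End Gauss.

(* (f *d g)(i) = sum_{s<e} f(s) g(d s + i)  (functions on Z/eZ, read via nat mod e) *)
Definition dconv (e d : nat) (f g : nat -> algC) (i : nat) : algC :=
  \sum_(s < e) f s * g (d * s + i)%N.

Definition dconvmx (e d : nat) (A B : nat -> nat -> algC) (i j : nat) : algC :=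
  \sum_(s < e) \sum_(t < e) A s t * B (d * s + i)%N (d * t + j)%N.

From mathcomp Require Import all_boot all_order all_algebra all_field.
From mathcomp Require Import zify.
Import Order.TTheory GRing.Theory Num.Theory.
Local Open Scope ring_scope.
Set Implicit Arguments. Unset Strict Implicit. Unset Printing Implicit Defensive.

(** For one field, the periods are sums of the additive character
    psi = zeta_p ^ Tr over the cyclotomic classes C_a = beta^a <beta^e>.
    Substituting y = x z in eta(a) eta(a+c) gives
    sum_(z in C_c) sum_(x in C_a) psi(x (1 + z)), whose inner sum is f when
    1 + z = 0 and eta(a+k) when 1 + z lies in C_k; since sum_k eta(k) = -1,
    this is eta(a) eta(a+c) = sum_k (Cyc(c,k) - D_c f) eta(a+k).
    Such a formula transfers to the d-convolution of two periodic families: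
    expanding (eta *d eta')(i) (eta *d eta')(i+c) and applying both formulas,
    every shift of a summation index is absorbed by periodicity modulo e, and
    the coefficients that remain are the entries of C *d C'. *)

Definition periodic (T : Type) (e : nat) (G : nat -> T) :=
  forall n, G (n %% e)%N = G n.

Lemma periodic_congr T e (G : nat -> T) m n :
  periodic e G -> (m = n %[mod e])%N -> G m = G n.
Proof. by move=> G_per mn; rewrite -G_per mn G_per. Qed.

Lemma sum_periodic_shift (V : nmodType) e (G : nat -> V) c :
  periodic e G -> \sum_(k < e) G (k + c)%N = \sum_(k < e) G k.
Proof.
move=> G_per; elim: c => [|c IHc]; first by apply: eq_bigr => k _; rewrite addn0.
case: e G_per IHc => [|e] G_per IHc; first by rewrite !big_ord0.
rewrite -IHc big_ord_recr big_ord_recl /= addrC; congr (_ + _).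
  by apply: periodic_congr G_per _; rewrite addnS -addSn modnDl.
by apply: eq_bigr => k _; rewrite addnS addSn.
Qed.

Lemma sum_in_indicator (R : pzSemiRingType) (T : finType) (A : {pred T})
    (phi : T -> R) :
  \sum_(x in A) phi x = \sum_x (x \in A)%:R * phi x.
Proof. by rewrite big_mkcond; apply: eq_bigr => x _; rewrite mulr_natl mulrb. Qed.

Lemma sum_indicator_eq (R : pzSemiRingType) (T : finType) (A : {pred T}) y :
  \sum_(z in A) ((z == y)%:R : R) = (y \in A)%:R.
Proof.
have [yA|yA] := boolP (y \in A).
  by rewrite (bigD1 y) //= eqxx big1 ?addr0 // => z /andP[_ /negbTE ->].
by rewrite big1 // => z zA; case: eqP zA yA => // -> ->.
Qed.

Section DConvMul.
Variables (e d : nat) (h1 h2 : nat -> algC) (M1 M2 : nat -> nat -> algC).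
Hypotheses (h1_per : periodic e h1) (h2_per : periodic e h2).
Hypothesis M2_per : forall c, periodic e (M2 c).
Hypothesis h1_mul : forall a c,
  h1 a * h1 (a + c)%N = \sum_(k < e) M1 c k * h1 (a + k)%N.
Hypothesis h2_mul : forall a c,
  h2 a * h2 (a + c)%N = \sum_(k < e) M2 c k * h2 (a + k)%N.

Let E := dconv e d h1 h2.
Let DM := dconvmx e d M1 M2.

Lemma dconv_periodic : periodic e E.
Proof.
move=> n; apply: eq_bigr => s _; congr (_ * _).
by apply: (periodic_congr h2_per); rewrite modnDmr.
Qed.

Lemma dconvmx_periodic c : periodic e (DM c).
Proof.
move=> n; apply: eq_bigr => s _; apply: eq_bigr => t _; congr (_ * _).
by apply: (periodic_congr (M2_per _)); rewrite modnDmr.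
Qed.

Lemma dconv_shift b n :
  E n = \sum_(s < e) h1 (s + b)%N * h2 (d * (s + b) + n)%N.
Proof.
have G_per : periodic e (fun s => h1 s * h2 (d * s + n)%N).
  move=> s; rewrite h1_per; congr (_ * _).
  by apply: (periodic_congr h2_per); rewrite -modnDml modnMmr modnDml.
by rewrite (sum_periodic_shift b G_per).
Qed.

Lemma dconv_mul_shift i c :
  E i * E (i + c)%N = \sum_(k < e) DM c k * E (k + i)%N.
Proof.
(* Substitute t = s + a, apply both formulas, and shift the index of the second
   one by d b, so that the variable s can be summed out last. *)
pose X s a b k := M1 a b * M2 (d * a + c)%N (d * b + k)%N *
                  (h1 (s + b)%N * h2 (d * (s + b) + (k + i))%N).
transitivity (\sum_(s < e) \sum_(a < e) \sum_(b < e) \sum_(k < e) X s a b k).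
  rewrite {1}/E {1}/dconv mulr_suml; apply: eq_bigr => s _.
  rewrite (dconv_shift s) mulr_sumr; apply: eq_bigr => a _.
  rewrite mulrACA [(a + s)%N]addnC h1_mul.
  rewrite (_ : (d * (s + a) + (i + c) = (d * s + i) + (d * a + c))%N); last by lia.
  rewrite h2_mul mulr_suml; apply: eq_bigr => b _.
  set G := fun m => M1 a b * h1 (s + b)%N * (M2 (d * a + c)%N m * h2 (d * s + i + m)%N).
  rewrite mulr_sumr -(@sum_periodic_shift _ e G (d * b)); last first.
    move=> m; rewrite /G M2_per; congr (_ * (_ * _)).
    by apply: (periodic_congr h2_per); rewrite modnDmr.
  apply: eq_bigr => k _; rewrite /X /G mulrACA [(k + _)%N]addnC.
  by congr (_ * (_ * h2 _)); lia.
have DM_E k : DM c k * E (k + i)%N = \sum_(a < e) \sum_(b < e) \sum_(s < e) X s a b k.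
  rewrite mulr_suml; apply: eq_bigr => a _; rewrite mulr_suml; apply: eq_bigr => b _.
  by rewrite (dconv_shift b) mulr_sumr.
under [RHS]eq_bigr do rewrite DM_E.
rewrite [LHS]exchange_big [RHS]exchange_big /=; apply: eq_bigr => a _.
rewrite exchange_big [RHS]exchange_big /=; apply: eq_bigr => b _.
exact: exchange_big.
Qed.

Lemma dconv_mul (i j : 'I_e) :
  E i * E j = \sum_(k < e) DM ((j + e - i) %% e)%N ((k + e - i) %% e)%N * E k.
Proof.
have le_ie : (i <= e)%N := ltnW (ltn_ord i).
have -> : E j = E (i + (j + e - i) %% e)%N.
  apply: (periodic_congr dconv_periodic).
  by rewrite modnDmr (_ : i + (j + e - i) = j + e)%N ?modnDr //; lia.
set c := ((j + e - i) %% e)%N.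
rewrite dconv_mul_shift -(@sum_periodic_shift _ e (fun k => DM c ((k + e - i) %% e)%N * E k) i).
  apply: eq_bigr => k _; rewrite (_ : k + i + e - i = k + e)%N; last by lia.
  by rewrite modnDr dconvmx_periodic.
move=> n; rewrite dconv_periodic; congr (DM c _ * _).
by rewrite -addnBA // -[in RHS]addnBA // modnDml.
Qed.
End DConvMul.

Lemma eta_periodic (F : finFieldType) l m e (beta : F) :
  periodic e (eta l m e beta).
Proof. by move=> n; rewrite /eta modn_mod. Qed.

Lemma multmx_periodic (F : finFieldType) e (beta : F) c :
  periodic e (multmx e beta c).
Proof. by move=> n; rewrite /multmx /Cyc modn_mod. Qed.

Lemma prime_root_of_unity (R : idomainType) p (z : R) :
  prime p -> z ^+ p = 1 -> z != 1 -> p.-primitive_root z.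
Proof.
move=> p_pr zp1 z_neq1.
have [m m_prim m_dvd] := prim_order_exists (prime_gt0 p_pr) zp1.
case/primeP: p_pr => _ /(_ m m_dvd) /orP[/eqP m1|/eqP <- //].
by move: z_neq1; rewrite -(prim_expr_order m_prim) m1 expr1 eqxx.
Qed.

Lemma zeta_prim p : prime p -> p.-primitive_root (zeta p).
Proof.
move=> p_pr; have p_gt1 := prime_gt1 p_pr.
(* The principal root is never a negative real, so [zeta p != 1] for odd [p]. *)
have w_neq_m1 : p.-root (-1) != -1 :> algC.
  by apply/eqP => w1; have := @rootC_lt0 algC _ (-1) p_gt1; rewrite w1 ltrN10.
have wp : p.-root (-1) ^+ p = -1 :> algC := rootCK (ltnW p_gt1) _.
rewrite /zeta; move: (p.-root _) wp w_neq_m1 => w wp w_neq_m1.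
apply: prime_root_of_unity => //; first by rewrite exprAC wp sqrrN expr1n.
rewrite sqrf_eq1 negb_or w_neq_m1 andbT.
apply/eqP => w1; move: wp; rewrite w1 expr1n => /eqP.
by rewrite gt_eqF // (lt_trans (ltrN10 _) ltr01).
Qed.

Lemma dvdn_pred_card (F : finFieldType) m e :
  #|F| = m -> (m = 1 %[mod e])%N -> (e %| #|F|.-1)%N.
Proof.
move=> <- card_mod; rewrite -subn1 -eqn_mod_dvd ?card_mod //.
exact: ltnW (finNzRing_gt1 F).
Qed.

Section GaussPeriods.
Variables (F : finFieldType) (e : nat) (beta : F).
Hypotheses (beta_prim : (#|F|.-1).-primitive_root beta) (e_gt0 : (0 < e)%N).
Hypothesis e_dvd : (e %| #|F|.-1)%N.

Local Notation N := #|F|.-1.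
Local Notation f := (ff F e).

Lemma pred_card_ff : N = (e * f)%N.
Proof. by rewrite /ff subn1 mulnC divnK. Qed.

Local Notation rep a j := (beta ^+ (e * j + a %% e)%N).

Definition cyc_class (a : nat) : {set F} := [set rep a j | j : 'I_f].

Local Notation C := cyc_class.

Lemma cyc_class_mod a : C (a %% e) = C a.
Proof. by rewrite /C modn_mod. Qed.

Lemma cyc_class_rep_inj a : injective (fun j : 'I_f => rep a j).
Proof.
have lt_N (j : 'I_f) : (e * j + a %% e < N)%N.
  rewrite pred_card_ff; apply: leq_trans (_ : e * j.+1 <= _)%N.
    by rewrite mulnS addnC ltn_add2r ltn_pmod.
  by rewrite leq_mul2l ltn_ord orbT.
move=> j1 j2 /eqP; rewrite (eq_prim_root_expr beta_prim) !(modn_small (lt_N _)).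
by rewrite eqn_add2r eqn_mul2l eqn0Ngt e_gt0 => /eqP /val_inj.
Qed.

Lemma card_cyc_class a : #|C a| = f.
Proof. by rewrite card_imset ?card_ord //; apply: cyc_class_rep_inj. Qed.

Lemma mem_cyc_class a n : (n = a %[mod e])%N -> beta ^+ n \in C a.
Proof.
move=> na; apply/imsetP.
have N_gt0 : (0 < N)%N := prim_order_gt0 beta_prim.
have lt_f : ((n %% N) %/ e < f)%N by rewrite ltn_divLR // mulnC -pred_card_ff ltn_pmod.
exists (Ordinal lt_f) => //=.
rewrite -(prim_expr_mod beta_prim) {1}(divn_eq (n %% N) e) mulnC.
by rewrite -na (modn_dvdm _ e_dvd).
Qed.

Lemma cyc_classP a x :
  reflect (exists2 n, x = beta ^+ n & (n = a %[mod e])%N) (x \in C a).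
Proof.
apply: (iffP imsetP) => [[j _ ->]|[n -> /mem_cyc_class/imsetP //]].
by exists (e * j + a %% e)%N; rewrite // mulnC modnMDl modn_mod.
Qed.

Lemma cyc_class_neq0 a x : x \in C a -> x != 0.
Proof.
case/cyc_classP => n -> _; rewrite expf_neq0 // (prim_root_eq0 beta_prim).
by rewrite -lt0n (prim_order_gt0 beta_prim).
Qed.

Lemma notin_cyc_class0 a : 0 \notin C a.
Proof. by apply/negP => /cyc_class_neq0; rewrite eqxx. Qed.

Lemma cyc_classM a b x y : x \in C a -> y \in C b -> x * y \in C (a + b).
Proof.
case/cyc_classP => n -> na /cyc_classP[m -> mb].
by rewrite -exprD; apply: mem_cyc_class; rewrite -modnDm na mb modnDm.
Qed.

Lemma cyc_class_cover x : x != 0 -> exists a : 'I_e, x \in C a.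
Proof.
move=> x_neq0; have xN : x ^+ N = 1.
  apply: (mulfI x_neq0); rewrite mulr1 -exprS prednK ?expf_card //.
  by apply/card_gt0P; exists 0.
have [i ->] := prim_rootP beta_prim xN.
by exists (Ordinal (ltn_pmod i e_gt0)); apply: mem_cyc_class; rewrite /= modn_mod.
Qed.

Lemma cyc_class_uniq a b x : x \in C a -> x \in C b -> (a = b %[mod e])%N.
Proof.
case/cyc_classP => n -> na /cyc_classP[m /eqP].
rewrite (eq_prim_root_expr beta_prim) => nm mb.
by rewrite -na -mb -(modn_dvdm n e_dvd) (eqP nm) (modn_dvdm m e_dvd).
Qed.

Lemma cyc_class_mulr a b c : c \in C b -> [set x * c | x in C a] = C (a + b).
Proof.
move=> cb; have c_neq0 := cyc_class_neq0 cb.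
apply/setP => y; apply/imsetP/idP => [[x xa ->]|ya]; first exact: cyc_classM.
have /cyc_class_cover[k yk] : y / c != 0.
  by rewrite mulf_neq0 ?invr_eq0 ?(cyc_class_neq0 ya).
exists (y / c); last by rewrite divfK.
have /cyc_class_uniq/(_ ya) : y \in C (k + b) by rewrite -(divfK c_neq0 y) cyc_classM.
by move/eqP; rewrite eqn_modDr => /eqP ka; rewrite -cyc_class_mod -ka cyc_class_mod.
Qed.

Lemma sum_cyc_class (V : nmodType) (phi : F -> V) a :
  \sum_(x in C a) phi x = \sum_(j < f) phi (rep a j).
Proof. by rewrite big_imset //; apply: in2W; apply: cyc_class_rep_inj. Qed.

Lemma sum_cyc_class_mulr (V : nmodType) (phi : F -> V) a b c : c \in C b ->
  \sum_(x in C a) phi (x * c) = \sum_(y in C (a + b)) phi y.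
Proof.
move=> cb; rewrite -(cyc_class_mulr a cb) [RHS]big_imset // => x1 x2 _ _.
by apply: mulIf; apply: cyc_class_neq0 cb.
Qed.

Lemma sum_cyc_class_indicator (R : pzSemiRingType) (G : nat -> R) x (a : 'I_e) :
  x \in C a ->
  \sum_(k < e) (x \in C k)%:R * G k = G a.
Proof.
move=> xa; rewrite (bigD1 a) //= xa mul1r big1 ?addr0 // => k ka.
have [xk|] := boolP (x \in C k); last by rewrite mul0r.
have := cyc_class_uniq xk xa; rewrite !modn_small // => /val_inj k_eq_a.
by rewrite k_eq_a eqxx in ka.
Qed.

Lemma eta_cyc_class l m a :
  eta l m e beta a = \sum_(x in C a) zeta l ^+ trnat l m x.
Proof. by rewrite sum_cyc_class. Qed.

Lemma Cyc_cyc_class a b :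
  (Cyc e beta a b)%:R = \sum_(z in C a) (1 + z \in C b)%:R :> algC.
Proof.
rewrite /Cyc -sum1_card natr_sum big_mkcond /=.
transitivity (\sum_(v : 'I_f * 'I_f) ((1 + rep a v.1 == rep b v.2) : nat)%:R : algC).
  by apply: eq_bigr => v _; rewrite inE; case: eqP.
rewrite -(pair_bigA _ (fun v1 v2 : 'I_f => ((1 + rep a v1 == rep b v2) : nat)%:R)) sum_cyc_class.
apply: eq_bigr => v1 _; rewrite -sum_indicator_eq sum_cyc_class.
by apply: eq_bigr => v2 _; rewrite eq_sym.
Qed.

Lemma Dsgn_cyc_class a :
  (Dsgn e beta a)%:R = \sum_(z in C a) (1 + z == 0)%:R :> algC.
Proof.
under eq_bigr do rewrite addrC addr_eq0.
rewrite sum_indicator_eq; congr (nat_of_bool _)%:R.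
by apply/existsP/imsetP => -[v]; [exists v => //; apply/eqP | move=> _ ->; exists v].
Qed.

Variables (p r : nat).
Hypotheses (p_pr : prime p) (r_gt0 : (0 < r)%N) (cardF : #|F| = (p ^ r)%N).

Let charF : p \in [pchar F] := card_finPcharP cardF p_pr.
Local Notation tr := (@trF F p r).
Local Notation trn := (@trnat F p r).

Lemma eqr_nat_modp a b : ((a%:R : F) == b%:R) = (a == b %[mod p])%N.
Proof.
wlog le_ba : a b / (b <= a)%N.
  by move=> W; case/orP: (leq_total b a) => /W //; rewrite eq_sym => ->; rewrite eq_sym.
by rewrite eqn_mod_dvd // (dvdn_pcharf charF) natrB // subr_eq0.
Qed.

Lemma Frobenius_fixed_natr (y : F) : y ^+ p = y -> [exists k : 'I_p, k%:R == y].
Proof.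
move=> yp; apply: contraT => /existsPn no_k.
pose P : {poly F} := 'X^p - 'X.
have P_size : size P = p.+1.
  by rewrite size_polyDl ?size_polyXn // size_polyN size_polyX ltnS prime_gt1.
have P_neq0 : P != 0 by rewrite -size_poly_gt0 P_size.
have P_root z : z ^+ p = z -> root P z by move=> zp; rewrite rootE !hornerE zp subrr.
pose rs := y :: [seq k%:R | k : 'I_p].
have rs_roots : all (root P) rs.
  rewrite /= P_root //=; apply/allP => _ /mapP[k _ ->]; apply: P_root.
  by rewrite -(pFrobenius_autE charF) pFrobenius_aut_nat.
have rs_uniq : uniq rs.
  rewrite /= map_inj_uniq ?enum_uniq ?andbT.
    by apply/mapP => -[k _ /eqP]; rewrite eq_sym (negbTE (no_k k)).
  move=> k1 k2 /eqP; rewrite eqr_nat_modp !modn_small //.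
  by move/eqP/val_inj.
have := max_poly_roots P_neq0 rs_roots rs_uniq.
by rewrite /= size_map size_enum_ord P_size ltnn.
Qed.

Lemma trFD x y : tr (x + y) = tr x + tr y.
Proof.
rewrite /trF -big_split /=; apply: eq_bigr => k _.
by apply: exprDn_pchar; rewrite (eq_pnat _ (pcharf_eq charF)) pnatX pnat_id.
Qed.

Lemma trF_Frobenius x : tr x ^+ p = tr x.
Proof.
rewrite -(pFrobenius_autE charF) rmorph_sum /=.
under eq_bigr => k _ do rewrite pFrobenius_autE -exprM -expnSr.
case: r r_gt0 cardF => // r' _ cardF'.
rewrite /trF big_ord_recr [RHS]big_ord_recl /= expn0 expr1 -cardF' expf_card addrC.
by congr (_ + _); apply: eq_bigr => k _.
Qed.

Lemma natr_trnat x : (trn x)%:R = tr x.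
Proof.
rewrite /trnat; case: pickP => [k /eqP -> //|no_k] /=.
by case/existsP: (Frobenius_fixed_natr (trF_Frobenius x)) => k; rewrite no_k.
Qed.

Lemma trF_neq0 : exists y, tr y != 0.
Proof.
(* The trace is a nonzero polynomial of degree p ^ (r - 1) < #|F|. *)
have [y|tr0] := pickP (fun y => tr y != 0); first by exists y.
have p_gt1 := prime_gt1 p_pr.
move: tr0; rewrite /trF; case: r r_gt0 cardF => // r' _ cardF' tr0.
pose P : {poly F} := \sum_(k < r'.+1) 'X^(p ^ k).
have P_size : size P = (p ^ r').+1.
  rewrite /P big_ord_recr /= addrC size_polyDl size_polyXn // ltnS.
  apply: leq_trans (size_sum _ _ _) _; apply/bigmax_leqP => k _.
  by rewrite size_polyXn ltn_exp2l.
have P_neq0 : P != 0 by rewrite -size_poly_gt0 P_size.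
have P_roots : all (root P) (enum F).
  apply/allP => y _; rewrite rootE horner_sum.
  by under eq_bigr do rewrite hornerXn; move/negbFE: (tr0 y).
have := max_poly_roots P_neq0 P_roots (enum_uniq _).
by rewrite -cardT cardF' P_size ltnS leqNgt ltn_exp2l // ltnSn.
Qed.

Local Notation psi x := (zeta p ^+ trn x).

Lemma eq_zetaX a b : (zeta p ^+ a == zeta p ^+ b) = ((a%:R : F) == b%:R).
Proof. by rewrite (eq_prim_root_expr (zeta_prim p_pr)) eqr_nat_modp. Qed.

Lemma psiD x y : psi (x + y) = psi x * psi y.
Proof. by apply/eqP; rewrite -exprD eq_zetaX natrD !natr_trnat trFD. Qed.

Lemma psi0 : psi 0 = 1.
Proof.
have psi0_neq0 : psi 0 != 0.
  by rewrite expf_neq0 // (prim_root_eq0 (zeta_prim p_pr)) -lt0n prime_gt0.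
by apply: (mulfI psi0_neq0); rewrite -psiD !addr0 mulr1.
Qed.

Lemma sum_psi : \sum_x psi x = 0.
Proof.
have [y tr_y] := trF_neq0.
have psi_y : psi y != 1 by rewrite -(expr0 (zeta p)) eq_zetaX natr_trnat.
have : \sum_x psi x = psi y * \sum_x psi x.
  rewrite {1}(reindex_inj (addIr y)) mulr_sumr; apply: eq_bigr => x _.
  by rewrite psiD mulrC.
move/eqP; rewrite -subr_eq0 -{1}[\sum_x _]mul1r -mulrBl mulf_eq0 subr_eq0.
by rewrite eq_sym (negbTE psi_y) => /eqP.
Qed.

Local Notation eta := (eta p r e beta).

Lemma sum_eta : \sum_(k < e) eta k = -1.
Proof.
under eq_bigr do rewrite eta_cyc_class sum_in_indicator.
rewrite exchange_big (bigD1 0) //= big1 ?add0r => [|k _]; last first.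
  by rewrite (negbTE (notin_cyc_class0 _)) mul0r.
have /eqP := sum_psi; rewrite (bigD1 0) //= psi0 addrC addr_eq0 => /eqP <-.
apply: eq_bigr => x /cyc_class_cover[] // k xk.
exact: (sum_cyc_class_indicator (fun=> psi x) xk).
Qed.

Lemma sum_psi_cyc_class_mul a w :
  \sum_(x in C a) psi (x * w) =
    (w == 0)%:R * f%:R + \sum_(k < e) (w \in C k)%:R * eta (a + k).
Proof.
have [-> | w_neq0] := eqVneq w 0.
  rewrite mul1r [X in _ + X]big1 ?addr0 => [|k _]; last first.
    by rewrite (negbTE (notin_cyc_class0 _)) mul0r.
  under eq_bigr do rewrite mulr0 psi0.
  by rewrite sumr_const card_cyc_class.
have [k wk] := cyc_class_cover w_neq0.
rewrite mul0r add0r (sum_cyc_class_indicator (fun k => eta (a + k)) wk) eta_cyc_class.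
exact: sum_cyc_class_mulr.
Qed.

Lemma eta_mul a c :
  eta a * eta (a + c)%N = \sum_(k < e) multmx e beta c k * eta (a + k)%N.
Proof.
have sum_eta_shift : \sum_(k < e) eta (a + k)%N = -1.
  under eq_bigr do rewrite addnC.
  by rewrite (sum_periodic_shift _ (@eta_periodic _ _ _ _ _)) sum_eta.
transitivity (\sum_(z in C c) \sum_(x in C a) psi (x * (1 + z))).
  rewrite eta_cyc_class mulr_suml exchange_big.
  apply: eq_bigr => x xa; rewrite addnC eta_cyc_class -(sum_cyc_class_mulr _ _ xa).
  rewrite mulr_sumr; apply: eq_bigr => z _.
  by rewrite -psiD mulrDr mulr1 mulrC.
under eq_bigr do rewrite sum_psi_cyc_class_mul.
rewrite big_split /= -mulr_suml -Dsgn_cyc_class exchange_big /=.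
under eq_bigr do rewrite -mulr_suml -Cyc_cyc_class.
under [RHS]eq_bigr do rewrite mulrBl.
by rewrite sumrB -mulr_sumr sum_eta_shift mulrN1 opprK natrM addrC.
Qed.

End GaussPeriods.

Theorem mainTheorem8 (e : nat) (he : (2 <= e)%N)
  (F1 : finFieldType) (p r : nat) (beta1 : F1)
  (F2 : finFieldType) (q s : nat) (beta2 : F2) :
  prime p -> (0 < r)%N -> #|F1| = (p ^ r)%N -> (p ^ r = 1 %[mod e])%N ->
  (#|F1|.-1).-primitive_root beta1 ->
  prime q -> (0 < s)%N -> #|F2| = (q ^ s)%N -> (q ^ s = 1 %[mod e])%N ->
  (#|F2|.-1).-primitive_root beta2 ->
  forall (d i j : 'I_e), (d : nat) != 0%N ->
  let E := dconv e d (eta p r e beta1) (eta q s e beta2) in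
  E i * E j =
  \sum_(k < e)
     dconvmx e d (multmx e beta1) (multmx e beta2)
             ((j + e - i) %% e)%N ((k + e - i) %% e)%N * E k.
Proof.
move=> p_pr r_gt0 cardF1 p_r beta1_prim q_pr s_gt0 cardF2 q_s beta2_prim d i j _ E.
have e_gt0 : (0 < e)%N := ltnW he.
apply: dconv_mul; [exact: eta_periodic | exact: eta_periodic | exact: multmx_periodic | |].
- exact: (eta_mul beta1_prim e_gt0 (dvdn_pred_card cardF1 p_r) p_pr r_gt0 cardF1).
- exact: (eta_mul beta2_prim e_gt0 (dvdn_pred_card cardF2 q_s) q_pr s_gt0 cardF2).
Qed.
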